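(* Let $\widehat{G}$ be a signed bigraph whose underlying bigraph is non-separable, with bipartition $(X,Y)$ and no isolated vertices, and let $x_1,\dots,x_\alpha,y_1,\dots,y_\beta$ be a canonical ordering of $\widehat{G}$. Suppose that there are distinct $x_i,x_j,x_k\in X$ and distinct $y_\ell,y_r\in Y$ with $x_i,x_j\in N(y_1)$ such that, in the subgraph induced by $\{x_i,x_j,x_k,y_\ell,y_r\}$, the edges are exactly $x_iy_\ell,x_jy_\ell,x_iy_r,x_jy_r,x_ky_r$ (so $x_ky_\ell$ is not an edge), where $x_iy_r$ and $x_jy_r$ are negative (the other three of any sign). If no edge of $\widehat{G}$ is signed simplicial, then $\widehat{G}$ contains a graph in $F_2\cup F_3\cup F_4\cup F_5$ as an induced subgraph, where: $F_2$: complete bigraph with parts $\{a_1,a_2\}$, $\{b_1,b_2,b_3\}$, $a_1b_1,a_1b_2,a_2b_2,a_2b_3$ negative, $a_1b_3,a_2b_1$ free; $F_3$: complete bigraph with parts $\{a_1,a_2\}$, $\{b_1,\dots,b_4\}$, $a_1b_1,a_1b_2,a_2b_3,a_2b_4$ negative, other four edges free; $F_4$: complete bigraph with parts $\{a_1,a_2,a_3\}$, $\{b_1,b_2,b_3\}$, $a_1b_1,a_2b_2,a_3b_3$ negative, other six edges free; $F_5$: bigraph with parts $\{a_1,a_2,a_3\}$, $\{b_1,b_2,b_3\}$ having all nine possible edges except $a_1b_3$, with $a_2b_1,a_3b_2$ negative and the other six edges free.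
   Context: A signed graph is a finite simple graph each of whose edges is assigned a sign, positive or negative. A signed bigraph is a signed graph whose underlying graph is bipartite. A bigraph is non-separable if it contains no induced $2K_2$. An induced subgraph is obtained by deleting vertices only; $\widehat G$ contains $H$ as an induced subgraph if some induced subgraph is isomorphic to $H$ via a sign-preserving isomorphism. In a bigraph with bipartition $(X,Y)$, a subgraph $H$ is a biclique if every vertex of $V(H)\cap X$ is adjacent to every vertex of $V(H)\cap Y$. For an edge $uv$, $N(uv)=(N(u)\cup N(v))\setminus\{u,v\}$; $uv$ is signed simplicial if $N(uv)$ induces a biclique all of whose edges are positive. A canonical ordering of a non-separable bigraph with $X=\{x_1,\dots,x_\alpha\}$, $Y=\{y_1,\dots,y_\beta\}$ is an ordering with $N(x_1)\supseteq\cdots\supseteq N(x_\alpha)$ and $N(y_1)\subseteq\cdots\subseteq N(y_\beta)$. A family described by a graph with some edges declared negative and the rest declared free is the set of all signed graphs obtained by giving each free edge an arbitrary sign. *)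

From mathcomp Require Import all_boot.
Set Implicit Arguments. Unset Strict Implicit. Unset Printing Implicit Defensive.

Record sgraph (V : finType) := SGraph { sadj : rel V; sneg : rel V }.

Definition is_sgraph (V : finType) (G : sgraph V) : Prop :=
  symmetric (sadj G) /\ irreflexive (sadj G) /\
  (forall u v, sadj G u v -> sneg G u v = sneg G v u).

Definition Nbhd (V : finType) (G : sgraph V) (v : V) : {set V} :=
  [set u | sadj G v u].

Definition bipartition (V : finType) (G : sgraph V) (X : {set V}) : Prop :=
  forall u v, sadj G u v -> (u \in X) != (v \in X).

Definition no_isolated (V : finType) (G : sgraph V) : Prop :=
  forall v, exists u, sadj G v u.

(* contains no induced 2K2 *)
Definition nonseparable (V : finType) (G : sgraph V) : Prop :=
  ~ exists a b c d : V,
      [/\ uniq [:: a; b; c; d], sadj G a b, sadj G c d &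
          ~~ (sadj G a c || sadj G a d || sadj G b c || sadj G b d)].

(* canonical ordering x_1..x_alpha (= xs) of X and y_1..y_beta (= ys) of Y = ~: X *)
Definition canonical_ordering (V : finType) (G : sgraph V) (X : {set V})
    (xs ys : seq V) : Prop :=
  [/\ uniq xs /\ (forall v, (v \in xs) = (v \in X)),
      uniq ys /\ (forall v, (v \in ys) = (v \in ~: X)),
      sorted (fun u w => Nbhd G w \subset Nbhd G u) xs &
      sorted (fun u w => Nbhd G u \subset Nbhd G w) ys].

Definition Nedge (V : finType) (G : sgraph V) (u v : V) : {set V} :=
  (Nbhd G u :|: Nbhd G v) :\: [set u; v].

Definition positive_biclique (V : finType) (G : sgraph V) (X : {set V})
    (S : {set V}) : Prop :=
  (forall a b, a \in S -> b \in S -> a \in X -> b \notin X -> sadj G a b) /\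
  (forall a b, a \in S -> b \in S -> sadj G a b -> ~~ sneg G a b).

Definition signed_simplicial (V : finType) (G : sgraph V) (X : {set V})
    (u v : V) : Prop :=
  sadj G u v /\ positive_biclique G X (Nedge G u v).

Definition contains_induced (V W : finType) (G : sgraph V) (H : sgraph W) : Prop :=
  exists f : W -> V,
    [/\ injective f,
        (forall a b, sadj G (f a) (f b) = sadj H a b) &
        (forall a b, sadj H a b -> sneg G (f a) (f b) = sneg H a b)].

(* Family described by a graph adjF with negative edges negF, all other edges free *)
Definition in_family (n : nat) (adjF negF : rel 'I_n) (H : sgraph 'I_n) : Prop :=
  [/\ is_sgraph H, sadj H =2 adjF &
      (forall a b, adjF a b -> negF a b -> sneg H a b)].

Definition pair_in (n : nat) (s : seq (nat * nat)) (i j : 'I_n) : bool :=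
  (((i : nat), (j : nat)) \in s) || (((j : nat), (i : nat)) \in s).

(* F2: a1,a2 = 0,1 ; b1,b2,b3 = 2,3,4 *)
Definition adjF2 : rel 'I_5 := fun i j => (i < 2) != (j < 2).
Definition negF2 : rel 'I_5 := pair_in [:: (0,2); (0,3); (1,3); (1,4)].
(* F3: a1,a2 = 0,1 ; b1..b4 = 2..5 *)
Definition adjF3 : rel 'I_6 := fun i j => (i < 2) != (j < 2).
Definition negF3 : rel 'I_6 := pair_in [:: (0,2); (0,3); (1,4); (1,5)].
(* F4: a1,a2,a3 = 0,1,2 ; b1,b2,b3 = 3,4,5 *)
Definition adjF4 : rel 'I_6 := fun i j => (i < 3) != (j < 3).
Definition negF4 : rel 'I_6 := pair_in [:: (0,3); (1,4); (2,5)].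
(* F5: same parts, all edges except a1b3 = (0,5) *)
Definition adjF5 : rel 'I_6 :=
  fun i j => ((i < 3) != (j < 3)) && ~~ pair_in [:: (0,5)] i j.
Definition negF5 : rel 'I_6 := pair_in [:: (1,3); (2,4)].

From mathcomp Require Import all_boot.
Set Implicit Arguments. Unset Strict Implicit. Unset Printing Implicit Defensive.

(* Since G has no induced 2K2, the neighbourhoods of the vertices of X form a
   chain, so yr has a neighbour m whose neighbourhood is least; as N(m) lies in
   N(xk), m is not adjacent to yl.  Every vertex of N(yr) sees every vertex of
   N(m), so N(m yr) is a biclique, and since m yr is not signed simplicial it
   contains a negative edge uv with u in N(yr) - m and v in N(m) - yr.  If N(u)
   is not contained in N(m), then m, u and one of xi, xj (distinct from u)
   induce a member of F5.  Otherwise u is again a least neighbour of yr, and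
   repeating the argument at u gives a second negative edge u'v'.  If v = v',
   then {yr, v} and {xi, xj, u, u'} induce a member of F3; otherwise {xi, u, u'}
   and {yr, v, v'} induce a member of F4. *)

Lemma uniq_sides (T : eqType) (A : pred T) (s t : seq T) : uniq s -> uniq t ->
  all A s -> all (predC A) t -> uniq (s ++ t).
Proof.
move=> us ut /allP sA /allP tA; rewrite cat_uniq us ut andbT.
by apply/hasPn => v /tA /=; apply: contra => /sA.
Qed.

Section SignedBigraph.
Variables (T : finType) (G : sgraph T) (X : {set T}).
Hypotheses (HG : is_sgraph G) (HB : bipartition G X).

Lemma sadjC u v : sadj G u v = sadj G v u.
Proof. by case: HG => symG _; rewrite symG. Qed.

Lemma snegC u v : sadj G u v -> sneg G u v = sneg G v u.
Proof. by case: HG => _ [_]; apply. Qed.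

Lemma sadj_side u v : sadj G u v -> (u \in X) = (v \notin X).
Proof. by move/HB; case: (u \in X); case: (v \in X). Qed.

Lemma nadj_inX u v : u \in X -> v \in X -> sadj G u v = false.
Proof. by move=> uX vX; apply/negbTE/negP => /sadj_side; rewrite uX vX. Qed.

Lemma nadj_notinX u v : u \notin X -> v \notin X -> sadj G u v = false.
Proof.
by move=> uY vY; apply/negbTE/negP => /sadj_side; rewrite (negbTE uY) vY.
Qed.

Lemma contains_family_nth n (adjF negF : rel 'I_n) (s : seq T) (x0 : T) :
  size s = n -> uniq s ->
  (forall a b : 'I_n, sadj G (nth x0 s a) (nth x0 s b) = adjF a b) ->
  (forall a b : 'I_n, adjF a b -> negF a b -> sneg G (nth x0 s a) (nth x0 s b)) ->
  exists H, in_family adjF negF H /\ contains_induced G H.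
Proof.
move=> size_s uniq_s adjE negE; pose f (a : 'I_n) := nth x0 s a.
have f_inj : injective f.
  by move=> a b /eqP; rewrite nth_uniq ?size_s // => /eqP /val_inj.
exists (SGraph adjF (fun a b => sneg G (f a) (f b))); split; last by exists f.
case: HG => symG [irrG negG]; split=> //; split; [|split].
- by move=> a b /=; rewrite -!adjE symG.
- by move=> a /=; rewrite -adjE irrG.
- by move=> a b /=; rewrite -adjE; apply: negG.
Qed.

Lemma sadj_nadj_neql w u v : sadj G u w -> ~~ sadj G v w -> u != v.
Proof. by move=> uw; apply: contraNneq => <-. Qed.

Lemma sadj_nadj_neqr w u v : sadj G w u -> ~~ sadj G w v -> u != v.
Proof. by move=> wu; apply: contraNneq => <-. Qed.

Lemma sides_neq u v : u \in X -> v \notin X -> u != v.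
Proof. by move=> uX; apply: contraNneq => <-. Qed.

Lemma mem_Nedge_inX u v a : sadj G u v -> u \in X -> a \in X ->
  (a \in Nedge G u v) = (a \in Nbhd G v :\ u).
Proof.
move=> uv uX aX; have vY : v \notin X by rewrite -(sadj_side uv).
by rewrite !inE negb_or (nadj_inX uX aX) (sides_neq aX vY) andbT.
Qed.

Lemma mem_Nedge_notinX u v a : sadj G u v -> u \in X -> a \notin X ->
  (a \in Nedge G u v) = (a \in Nbhd G u :\ v).
Proof.
move=> uv uX aY; have vY : v \notin X by rewrite -(sadj_side uv).
by rewrite !inE negb_or (nadj_notinX vY aY) orbF (eq_sym a u) (sides_neq uX aY).
Qed.

Ltac solve_sadj :=
  first [ done | by rewrite sadjC | by rewrite nadj_inX | by rewrite nadj_notinX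
        | by apply/negbTE | by rewrite sadjC; apply/negbTE ].

Ltac solve_sneg := first [ done | by rewrite snegC // sadjC ].

Ltac case_pairs6 tac :=
  case=> [[|[|[|[|[|[|i]]]]]] ?] [[|[|[|[|[|[|j]]]]]] ?] //=; tac.

Lemma contains_F3 a1 a2 b1 b2 b3 b4 :
  a1 \notin X -> a2 \notin X -> b1 \in X -> b2 \in X -> b3 \in X -> b4 \in X ->
  a1 != a2 -> uniq [:: b1; b2; b3; b4] ->
  sadj G b1 a1 -> sadj G b2 a1 -> sadj G b3 a1 -> sadj G b4 a1 ->
  sadj G b1 a2 -> sadj G b2 a2 -> sadj G b3 a2 -> sadj G b4 a2 ->
  sneg G b1 a1 -> sneg G b2 a1 -> sneg G b3 a2 -> sneg G b4 a2 ->
  exists H : sgraph 'I_6, in_family adjF3 negF3 H /\ contains_induced G H.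
Proof.
move=> a1X a2X b1Y b2Y b3Y b4Y a12 ub *.
apply: (@contains_family_nth _ _ _ [:: a1; a2; b1; b2; b3; b4] a1) => //.
- apply: (@uniq_sides _ [predC X] [:: a1; a2]) => //;
    by rewrite /= ?inE ?negbK ?a12 ?a1X ?a2X ?b1Y ?b2Y ?b3Y ?b4Y.
- by case_pairs6 solve_sadj.
- by case_pairs6 ltac:(rewrite /negF3 /pair_in /= => _ //; solve_sneg).
Qed.

Lemma contains_F4 a1 a2 a3 b1 b2 b3 :
  a1 \in X -> a2 \in X -> a3 \in X -> b1 \notin X -> b2 \notin X -> b3 \notin X ->
  uniq [:: a1; a2; a3] -> uniq [:: b1; b2; b3] ->
  sadj G a1 b1 -> sadj G a1 b2 -> sadj G a1 b3 ->
  sadj G a2 b1 -> sadj G a2 b2 -> sadj G a2 b3 ->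
  sadj G a3 b1 -> sadj G a3 b2 -> sadj G a3 b3 ->
  sneg G a1 b1 -> sneg G a2 b2 -> sneg G a3 b3 ->
  exists H : sgraph 'I_6, in_family adjF4 negF4 H /\ contains_induced G H.
Proof.
move=> a1X a2X a3X b1Y b2Y b3Y ua ub *.
apply: (@contains_family_nth _ _ _ [:: a1; a2; a3; b1; b2; b3] a1) => //.
- apply: (@uniq_sides _ [in X] [:: a1; a2; a3]) => //;
    by rewrite /= ?inE ?a1X ?a2X ?a3X ?b1Y ?b2Y ?b3Y.
- by case_pairs6 solve_sadj.
- by case_pairs6 ltac:(rewrite /negF4 /pair_in /= => _ //; solve_sneg).
Qed.

Lemma contains_F5 a1 a2 a3 b1 b2 b3 :
  a1 \in X -> a2 \in X -> a3 \in X -> b1 \notin X -> b2 \notin X -> b3 \notin X ->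
  uniq [:: a1; a2; a3] -> uniq [:: b1; b2; b3] ->
  sadj G a1 b1 -> sadj G a1 b2 -> ~~ sadj G a1 b3 ->
  sadj G a2 b1 -> sadj G a2 b2 -> sadj G a2 b3 ->
  sadj G a3 b1 -> sadj G a3 b2 -> sadj G a3 b3 ->
  sneg G a2 b1 -> sneg G a3 b2 ->
  exists H : sgraph 'I_6, in_family adjF5 negF5 H /\ contains_induced G H.
Proof.
move=> a1X a2X a3X b1Y b2Y b3Y ua ub *.
apply: (@contains_family_nth _ _ _ [:: a1; a2; a3; b1; b2; b3] a1) => //.
- apply: (@uniq_sides _ [in X] [:: a1; a2; a3]) => //;
    by rewrite /= ?inE ?a1X ?a2X ?a3X ?b1Y ?b2Y ?b3Y.
- by case_pairs6 solve_sadj.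
- by case_pairs6 ltac:(rewrite /negF5 /pair_in /= => _ //; solve_sneg).
Qed.

End SignedBigraph.

Section LeastNeighbour.
Variables (T : finType) (G : sgraph T) (X : {set T}).
Hypotheses (HG : is_sgraph G) (HB : bipartition G X) (HN : nonseparable G).

Lemma nbhd_comparable x x' : x \in X -> x' \in X ->
  Nbhd G x \subset Nbhd G x' \/ Nbhd G x' \subset Nbhd G x.
Proof.
move=> xX x'X.
case: (boolP (Nbhd G x \subset Nbhd G x')) => [|/subsetPn[y]]; first by left.
rewrite !inE => xy x'ny; right; apply/subsetP => y'; rewrite !inE => x'y'.
apply/negPn/negP => xny'; apply: HN; exists x, y, x', y'.
have yY : y \notin X by rewrite -(sadj_side HB xy).
have y'Y : y' \notin X by rewrite -(sadj_side HB x'y').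
split=> //.
- rewrite /= !inE !negb_or (sides_neq xX yY) (sadj_nadj_neql xy x'ny).
  rewrite (sides_neq xX y'Y) (sadj_nadj_neqr xy xny') (sides_neq x'X y'Y).
  by rewrite (eq_sym y x') (sides_neq x'X yY).
- rewrite (nadj_inX HB xX x'X) (negbTE xny') (sadjC HG) (negbTE x'ny).
  by rewrite (nadj_notinX HB yY y'Y).
Qed.

Definition least_nbr (y m : T) : Prop :=
  sadj G m y /\ forall w, sadj G w y -> Nbhd G m \subset Nbhd G w.

Lemma least_nbr_adj y m w z : least_nbr y m -> sadj G w y -> sadj G m z -> sadj G w z.
Proof. by case=> _ minm wy; have := subsetP (minm w wy) z; rewrite !inE. Qed.

Lemma exists_least_nbr y x : y \notin X -> sadj G x y -> exists m, least_nbr y m.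
Proof.
move=> yY xy.
have [m my minm] := @arg_minnP _ x (sadj G ^~ y) (fun m => #|Nbhd G m|) xy.
exists m; split=> // w wy.
have mX : m \in X by rewrite (sadj_side HB my).
have wX : w \in X by rewrite (sadj_side HB wy).
have [//|wm] := nbhd_comparable mX wX.
have /eqP -> // : Nbhd G w == Nbhd G m by rewrite eqEcard wm minm.
Qed.

Hypothesis no_simplicial : forall u v, sadj G u v -> ~ signed_simplicial G X u v.

Lemma least_nbr_negative_edge y m : y \notin X -> least_nbr y m ->
  exists u v, [/\ u \in Nbhd G y :\ m, v \in Nbhd G m :\ y, sadj G u v & sneg G u v].
Proof.
move=> yY lm; have [my _] := lm; have mX : m \in X by rewrite (sadj_side HB my).
set S := Nedge G m y.
have [/existsP[a /existsP[b /and4P[aS bS ab nab]]]|none] :=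
  boolP [exists a, exists b, [&& a \in S, b \in S, sadj G a b & sneg G a b]].
- wlog aX : a b aS bS ab nab / a \in X.
    move=> oriented; case: (boolP (a \in X)) => [aX|aY]; first exact: (oriented a b).
    apply: (oriented b a) => //; first by rewrite (sadjC HG).
      by rewrite -(snegC HG ab).
    by rewrite (sadj_side HB ab) negbK in aY.
  have bY : b \notin X by rewrite -(sadj_side HB ab).
  exists a, b; split=> //.
  + by rewrite -(mem_Nedge_inX HB my).
  + by rewrite -(mem_Nedge_notinX HB my).
- exfalso; apply: (no_simplicial my); split=> //; split.
  + move=> a b aS bS aX bY; rewrite (mem_Nedge_inX HB my mX aX) in aS.
    rewrite (mem_Nedge_notinX HB my mX bY) in bS.
    move: aS bS; rewrite !inE (sadjC HG y) => /andP[_ ay] /andP[_ mb].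
    exact: least_nbr_adj lm ay mb.
  + move=> a b aS bS ab; apply: contra none => nab.
    by apply/existsP; exists a; apply/existsP; exists b; rewrite aS bS ab nab.
Qed.

Lemma least_nbr_F5_or_subset y m u v w z : y \notin X -> least_nbr y m ->
  u \in Nbhd G y :\ m -> v \in Nbhd G m :\ y -> sadj G u v -> sneg G u v ->
  sadj G w y -> sneg G w y -> w != u -> sadj G w z -> ~~ sadj G m z ->
  (exists H : sgraph 'I_6, in_family adjF5 negF5 H /\ contains_induced G H) \/
  Nbhd G u \subset Nbhd G m.
Proof.
move=> yY lm; have [my _] := lm; rewrite !inE (sadjC HG y).
move=> /andP[um uy] /andP[vy mv] uv nuv wy nwy wu wz mnz.
case: (boolP (Nbhd G u \subset Nbhd G m)) => [|/subsetPn[z' uz' mnz']].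
  by right.
left.
rewrite !inE in uz' mnz'.
have [mX uX wX] : [/\ m \in X, u \in X & w \in X].
  by rewrite !(sadj_side HB my, sadj_side HB uy, sadj_side HB wy).
have [t [ut wt mnt]] : exists t, [/\ sadj G u t, sadj G w t & ~~ sadj G m t].
  have [uw|wu'] := nbhd_comparable uX wX; [exists z' | exists z]; split=> //.
  - by have := subsetP uw z'; rewrite !inE; apply.
  - by have := subsetP wu' z; rewrite !inE; apply.
have vY : v \notin X by rewrite -(sadj_side HB mv).
have tY : t \notin X by rewrite -(sadj_side HB ut).
apply: (contains_F5 HG HB mX uX wX vY yY tY) => //.
- rewrite /= !inE !negb_or (eq_sym m u) um (eq_sym m w).
  by rewrite (sadj_nadj_neql wt mnt) (eq_sym u w) wu.
- by rewrite /= !inE !negb_or vy (sadj_nadj_neqr mv mnt) (sadj_nadj_neqr my mnt).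
- exact: least_nbr_adj lm wy mv.
Qed.

Definition neg_witness (y z w : T) : Prop := [/\ sadj G w y, sneg G w y & sadj G w z].

Definition least_neg_edge (y z u v : T) : Prop :=
  [/\ least_nbr y u, ~~ sadj G u z, v \in Nbhd G u :\ y & sneg G u v].

Lemma least_nbr_step y z w1 w2 m : y \notin X -> w1 != w2 ->
  neg_witness y z w1 -> neg_witness y z w2 -> least_nbr y m -> ~~ sadj G m z ->
  (exists H : sgraph 'I_6, in_family adjF5 negF5 H /\ contains_induced G H) \/
  exists u v, u != m /\ least_neg_edge y z u v.
Proof.
move=> yY w12 w1W w2W lm mnz; have [my minm] := lm.
have [u [v [uS vS uv nuv]]] := least_nbr_negative_edge yY lm.
have [w [[wy nwy wz] wu]] : exists w, neg_witness y z w /\ w != u.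
  by case: (eqVneq w1 u) => [<-|w1u]; [exists w2; rewrite eq_sym | exists w1].
have [F5|u_sub_m] := least_nbr_F5_or_subset yY lm uS vS uv nuv wy nwy wu wz mnz.
  by left.
move: uS vS; rewrite !inE (sadjC HG y) => /andP[um uy] /andP[vy _].
have lu : least_nbr y u.
  by split=> // w' /minm; apply: subset_trans u_sub_m.
right; exists u, v; split=> //; split=> //.
- by apply: contra mnz; apply: least_nbr_adj lu my.
- by rewrite !inE vy.
Qed.

Lemma least_neg_edges_F3_or_F4 y z w1 w2 u v u' v' : y \notin X -> w1 != w2 ->
  neg_witness y z w1 -> neg_witness y z w2 -> u' != u ->
  least_neg_edge y z u v -> least_neg_edge y z u' v' ->
  (exists H : sgraph 'I_6, in_family adjF3 negF3 H /\ contains_induced G H) \/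
  (exists H : sgraph 'I_6, in_family adjF4 negF4 H /\ contains_induced G H).
Proof.
move=> yY w12 [w1y nw1y w1z] [w2y nw2y w2z] u'u.
move=> [lu unz vS nuv] [lu' u'nz v'S nu'v'].
have [[uy _] [u'y _]] := (lu, lu').
move: vS v'S; rewrite !inE => /andP[vy uv] /andP[v'y u'v'].
have [uX u'X] : u \in X /\ u' \in X by rewrite !(sadj_side HB uy, sadj_side HB u'y).
have [w1X w2X] : w1 \in X /\ w2 \in X by rewrite !(sadj_side HB w1y, sadj_side HB w2y).
have vY : v \notin X by rewrite -(sadj_side HB uv).
have v'Y : v' \notin X by rewrite -(sadj_side HB u'v').
have adj_v w : sadj G w y -> sadj G w v by move=> wy; apply: least_nbr_adj lu wy uv.
have adj_v' w : sadj G w y -> sadj G w v' by move=> wy; apply: least_nbr_adj lu' wy u'v'.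
have [w1u w1u'] := (sadj_nadj_neql w1z unz, sadj_nadj_neql w1z u'nz).
have [w2u w2u'] := (sadj_nadj_neql w2z unz, sadj_nadj_neql w2z u'nz).
have [v_v'|vv'] := eqVneq v v'; [left; subst v' | right].
- apply: (contains_F3 HG HB yY vY w1X w2X uX u'X) => //; try exact: adj_v.
  + by rewrite eq_sym.
  + by rewrite /= !inE !negb_or w12 w1u w1u' w2u w2u' (eq_sym u u') u'u.
- apply: (contains_F4 HG HB w1X uX u'X yY vY v'Y) => //; try exact: adj_v;
    try exact: adj_v'.
  + by rewrite /= !inE !negb_or w1u w1u' (eq_sym u u') u'u.
  + by rewrite /= !inE !negb_or (eq_sym y v) vy (eq_sym y v') v'y vv'.
Qed.

End LeastNeighbour.

Theorem lemma3p3 (T : finType) (G : sgraph T) (X : {set T}) (xs ys : seq T)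
    (y1 xi xj xk yl yr : T) :
  is_sgraph G -> bipartition G X -> nonseparable G -> no_isolated G ->
  canonical_ordering G X xs ys -> ohead ys = Some y1 ->
  xi \in X -> xj \in X -> xk \in X -> uniq [:: xi; xj; xk] ->
  yl \in ~: X -> yr \in ~: X -> yl != yr ->
  xi \in Nbhd G y1 -> xj \in Nbhd G y1 ->
  sadj G xi yl -> sadj G xj yl -> sadj G xi yr -> sadj G xj yr ->
  sadj G xk yr -> ~~ sadj G xk yl ->
  sneg G xi yr -> sneg G xj yr ->
  (forall u v, sadj G u v -> ~ signed_simplicial G X u v) ->
  (exists H : sgraph 'I_5, in_family adjF2 negF2 H /\ contains_induced G H) \/
  (exists H : sgraph 'I_6, in_family adjF3 negF3 H /\ contains_induced G H) \/
  (exists H : sgraph 'I_6, in_family adjF4 negF4 H /\ contains_induced G H) \/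
  (exists H : sgraph 'I_6, in_family adjF5 negF5 H /\ contains_induced G H).
Proof.
move=> HG HB HN _ _ _ _ _ _ uxs _ yrY _ _ _ il jl ir jr kr knl nir njr no_simp.
rewrite inE in yrY.
have xij : xi != xj by move: uxs; rewrite /= !inE !negb_or => /andP[/andP[]].
have wi : neg_witness G yr yl xi by [].
have wj : neg_witness G yr yl xj by [].
have nadj_yl m : least_nbr G yr m -> ~~ sadj G m yl.
  by move=> lm; apply: contra knl; apply: least_nbr_adj lm kr.
have [m lm] := exists_least_nbr HG HB HN yrY kr.
have step := least_nbr_step HG HB HN no_simp yrY xij wi wj.
have [F5|[u [v [_ euv]]]] := step m lm (nadj_yl m lm); first by do 3 right.
have [lu _ _ _] := euv.
have [F5|[u' [v' [u'u eu'v']]]] := step u lu (nadj_yl u lu); first by do 3 right.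
have [F3|F4] := least_neg_edges_F3_or_F4 HG HB yrY xij wi wj u'u euv eu'v'.
  by right; left.
by do 2 right; left.
Qed.
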